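(* Let $f:N\to M$ be an $\mathcal L$-pure monomorphism with $M$ strict $\mathcal L$-atomic. Then $N$ is strict $\mathcal L$-atomic. In particular, every $\mathcal L$-pure submodule of a strict $\mathcal L$-atomic module is strict $\mathcal L$-atomic.
   Context: $R$ is a ring with $1$; modules are left $R$-modules; $\mathcal L$ is a nonempty class of modules. pp formulas, $\phi(M)$, ${\rm pp}_M(\bar m)$ as usual; $\phi\le_{\mathcal L}\psi$ means $\phi(L)\subseteq\psi(L)$ for all $L\in\mathcal L$. A homomorphism $f:A\to B$ is an $\mathcal L$-pure monomorphism if for every tuple $\bar a$ in $A$ and every pp formula $\phi$ with $f(\bar a)\in\phi(B)$ there is a pp formula $\psi\le_{\mathcal L}\phi$ with $\bar a\in\psi(A)$ (such $f$ need not be injective); a submodule is $\mathcal L$-pure if its inclusion is an $\mathcal L$-pure monomorphism. $(M,\bar m)$ is an $\mathcal L$-free realization of a pp formula $\phi$ if $\bar m\in\phi(M)$ and for every $L\in\mathcal L$ and $\bar c\in\phi(L)$ there is a homomorphism $M\to L$ sending $\bar m$ to $\bar c$. $M$ is strict $\mathcal L$-atomic if every finite tuple in $M$ is an $\mathcal L$-free realization of some pp formula. *)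

From HB Require Import structures.
From mathcomp Require Import all_boot all_order all_algebra.
Set Implicit Arguments. Unset Strict Implicit. Unset Printing Implicit Defensive.
Import GRing.Theory.
Local Open Scope ring_scope.

(* A pp formula in n free variables x_0..x_{n-1}:
     exists y_0..y_{m-1},  /\_{i<k}  sum_j A i j x_j + sum_l B i l y_l = 0
   (coefficients act on the left, as appropriate for left R-modules). *)
Record ppf (R : pzRingType) (n : nat) := PPF {
  ppf_m : nat;
  ppf_k : nat;
  ppf_A : 'I_ppf_k -> 'I_n -> R;
  ppf_B : 'I_ppf_k -> 'I_ppf_m -> R }.

Definition pp_sat (R : pzRingType) (n : nat) (phi : ppf R n)
    (M : lmodType R) (x : 'I_n -> M) : Prop :=
  exists y : 'I_(ppf_m phi) -> M,
    forall i : 'I_(ppf_k phi),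
      \sum_(j < n) @ppf_A R n phi i j *: x j
      + \sum_(l < ppf_m phi) @ppf_B R n phi i l *: y l = 0.

Definition pp_leL (R : pzRingType) (Lc : lmodType R -> Prop) (n : nat)
    (phi psi : ppf R n) : Prop :=
  forall L : lmodType R, Lc L ->
    forall x : 'I_n -> L, pp_sat phi x -> pp_sat psi x.

Definition Lpure (R : pzRingType) (Lc : lmodType R -> Prop)
    (A B : lmodType R) (f : A -> B) : Prop :=
  forall (n : nat) (a : 'I_n -> A) (phi : ppf R n),
    pp_sat phi (f \o a) ->
    exists psi : ppf R n, pp_leL Lc psi phi /\ pp_sat psi a.

Definition Lfree_realization (R : pzRingType) (Lc : lmodType R -> Prop)
    (n : nat) (phi : ppf R n) (M : lmodType R) (m : 'I_n -> M) : Prop :=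
  pp_sat phi m /\
  forall L : lmodType R, Lc L ->
    forall c : 'I_n -> L, pp_sat phi c ->
      exists g : {linear M -> L}, forall i, g (m i) = c i.

Definition strict_Latomic (R : pzRingType) (Lc : lmodType R -> Prop)
    (M : lmodType R) : Prop :=
  forall (n : nat) (m : 'I_n -> M),
    exists phi : ppf R n, Lfree_realization Lc phi m.

From HB Require Import structures.
From mathcomp Require Import all_boot all_order all_algebra.
Local Open Scope ring_scope.

(* Fix a tuple a in N.  Since M is strict L-atomic, f(a) is an L-free
   realization of some pp formula phi.  L-purity of f yields a pp formula
   psi <=_L phi with a in psi(N).  The key observation (lemma
   Lfree_realization_pullback) is that a is then an L-free realization of
   psi: a tuple c in psi(L) lies in phi(L) because psi <=_L phi, so there is
   a homomorphism g : M -> L with g(f(a)) = c, and g o f : N -> L sends a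
   to c. *)

Lemma Lfree_realization_pullback (R : pzRingType) (Lc : lmodType R -> Prop)
    (N M : lmodType R) (f : {linear N -> M}) (n : nat) (a : 'I_n -> N)
    (phi psi : ppf R n) :
  Lfree_realization Lc phi (f \o a) ->
  pp_leL Lc psi phi -> pp_sat psi a ->
  Lfree_realization Lc psi a.
Proof.
move=> [_ phi_free] psi_le_phi a_psi; split=> // L Lc_L c c_psi.
have [g g_fa] := phi_free L Lc_L c (psi_le_phi L Lc_L c c_psi).
by exists (g \o f)%FUN => i; exact: g_fa.
Qed.

Lemma Lpure_strict_Latomic (R : pzRingType) (Lc : lmodType R -> Prop)
    (N M : lmodType R) (f : {linear N -> M}) :
  Lpure Lc f -> strict_Latomic Lc M -> strict_Latomic Lc N.
Proof.
move=> f_pure M_atomic n a.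
have [phi phi_free] := M_atomic n (f \o a).
have [psi [psi_le_phi a_psi]] := f_pure n a phi (proj1 phi_free).
by exists psi; exact: Lfree_realization_pullback phi_free psi_le_phi a_psi.
Qed.

Theorem lemma2p3 (R : pzRingType) (Lc : lmodType R -> Prop)
    (HL : exists L0 : lmodType R, Lc L0) :
  (forall (N M : lmodType R) (f : {linear N -> M}),
      Lpure Lc f -> strict_Latomic Lc M -> strict_Latomic Lc N) /\
  (forall (M : lmodType R) (P : pred M) (N : @subLmodType R M P),
      Lpure Lc (val : N -> M) -> strict_Latomic Lc M -> strict_Latomic Lc N).
Proof.
split; first exact: Lpure_strict_Latomic.
move=> M P N val_pure M_atomic.
exact: (@Lpure_strict_Latomic R Lc N M (val : {linear N -> M}) val_pure M_atomic).
Qed.
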